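(* Let $k_+,k_-,t$ be integers with $0\leq k_-\leq k_+$, $k_++k_-\geq 1$ and $t>0$, and let $M\triangleq[-k_-,k_+]^*$. For every real $0<\epsilon<1/t$ there is a number $\lambda$, depending only on $t$ and $\epsilon$ (and not on $N$), such that for every sufficiently large integer $N$ with $\gcd(N,k_+!)=1$, setting $G\triangleq\mathbb{Z}_N$, there exists a subset $S=\{s_1,s_2,\dots, s_n\}\subseteq G$ with $\frac{1}{2}N^{1/t-\epsilon}\leq n \leq \frac{3}{2}N^{1/t-\epsilon}$ such that $G \overset{\lambda}{\geq} M \diamond_t S$.
   Context: $[a,b]^*=\{a,a+1,\dots,b\}\setminus\{0\}$. For a finite Abelian group $G$, a finite set $M\subseteq\mathbb{Z}\setminus\{0\}$ and $S=\{s_1,\dots,s_n\}\subseteq G$, we write $G \overset{\lambda}{\geq} M\diamond_t S$ if every element $g\in G$ can be written in at most $\lambda$ ways as a linear combination of at most $t$ elements of $S$ with coefficients from $M\cup\{0\}$, i.e., the number of vectors $\mathbf{e}\in(M\cup\{0\})^n$ with Hamming weight at most $t$ and $\sum_i e_is_i=g$ is at most $\lambda$. *)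

From mathcomp Require Import all_boot all_order all_algebra.
From Stdlib Require Reals.
Set Implicit Arguments. Unset Strict Implicit. Unset Printing Implicit Defensive.
Import GRing.Theory Num.Theory.
Local Open Scope ring_scope.

Definition Mset (km kp : nat) : pred int :=
  fun a => (- (km%:Z) <= a <= kp%:Z) && (a != 0).

Definition hweight (n : nat) (e : {ffun 'I_n -> int}) : nat :=
  #|[set i | e i != 0]|.

Definition lincomb (G : zmodType) (s : seq G) (e : {ffun 'I_(size s) -> int}) : G :=
  \sum_(i < size s) s`_i *~ e i.

Definition admissible (M : pred int) (t : nat) (n : nat)
    (e : {ffun 'I_n -> int}) : bool :=
  [forall i, (e i == 0) || (e i \in M)] && (hweight e <= t)%N.

(* G >=^lambda M <>_t S, where S = {s_1,...,s_n} is given by the duplicate-free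
   sequence s: every g has at most lambda admissible vectors e with sum e_i s_i = g. *)
Arguments lincomb {G} s e.
Arguments admissible M t {n} e.

Definition packing (G : zmodType) (lambda : nat) (M : pred int) (t : nat)
    (s : seq G) : Prop :=
  forall (g : G) (E : seq {ffun 'I_(size s) -> int}),
    uniq E ->
    (forall e, e \in E -> admissible M t e /\ lincomb s e = g) ->
    (size E <= lambda)%N.

(* Let K = km + kp + 1, n = 2^(m t) n0 and count maps f : 'I_n -> Z_N.  Call f
   bad if (i) two distinct admissible vectors supported on a common t-set of
   positions take the same value, or (ii) m + 1 admissible vectors with the same
   value form a pivot chain: each has a nonzero entry where all earlier ones
   vanish.  An event (i) holds for at most K N^(n-1) maps, an event (ii) for at
   most N^(n-m), because the pivots make its m equations triangular with pivot
   coefficients of size at most kp, hence invertible mod N.  There are (n K^2)^t,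
   resp. (n K)^(t(m+1)), such events, so with n0 ~ N^(1/t - eps) and m t eps > 1
   some f is good once N is large.  For a good f, vectors with a common value have
   pairwise distinct supports, so more than 2^(m t) of them would contain a pivot
   chain of length m + 1: the supports of m vectors cover at most m t positions.
   Unit vectors show that f takes each value at most 2^(m t) times, so any n0
   distinct values of f form the required set S. *)

From Stdlib Require Import ZArith Reals Lra.
From mathcomp Require Import all_boot all_order all_algebra zify.
Set Implicit Arguments. Unset Strict Implicit. Unset Printing Implicit Defensive.
Import GRing.Theory Num.Theory.
Local Open Scope ring_scope.

Section ZpArith.
Variable N : nat.
Hypothesis N_gt1 : (1 < N)%N.

Lemma Zp_val_lt (a : 'Z_N) : (val a < N)%N.
Proof. by have := ltn_ord a; rewrite [X in (_ < X)%N -> _]Zp_cast. Qed.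

Lemma card_Zp_ffun (I : finType) : #|{ffun I -> 'Z_N}| = (N ^ #|I|)%N.
Proof. by rewrite card_ffun card_ord Zp_cast. Qed.

Lemma Zp_mulrz_eqmod (a b : 'Z_N) (x : int) :
  a *~ x = b *~ x -> (val a * `|x| = val b * `|x| %[mod N])%N.
Proof.
have valM (c : 'Z_N) k : val (c *+ k) = (val c * k %% N)%N.
  by rewrite Zp_mulrn /= [X in (_ %% X)%N]Zp_cast.
case: x => k /=; first by rewrite -!pmulrn => /(congr1 val); rewrite !valM.
by rewrite !NegzE !mulrNz -!pmulrn => /oppr_inj /(congr1 val); rewrite !valM.
Qed.

Lemma Zp_mulrz_inj (x : int) : coprime N `|x| -> injective (fun a : 'Z_N => a *~ x).
Proof.
move=> coNx a b eq_ab; apply/eqP; rewrite -subr_eq0; apply/eqP/val_inj => /=.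
have /Zp_mulrz_eqmod : (a - b) *~ x = 0 *~ x by rewrite mulrzBl eq_ab subrr mul0rz.
rewrite mul0n mod0n => /eqP; rewrite -/(dvdn _ _) Gauss_dvdl //.
by rewrite /dvdn modn_small ?Zp_val_lt // => /eqP.
Qed.

Lemma Zp_mulrz_eq0 (a : 'Z_N) (x : int) : coprime N `|x| -> a *~ x = 0 -> a = 0.
Proof. by move=> coNx ax0; apply: (Zp_mulrz_inj coNx); rewrite /= ax0 mul0rz. Qed.

(* The quotient [a * |x| %/ N] recovers what reduction mod [N] forgets. *)
Lemma Zp_mulrz_divn_inj (a b : 'Z_N) (x : int) : x != 0 ->
  a *~ x = b *~ x -> (val a * `|x| %/ N = val b * `|x| %/ N)%N -> a = b.
Proof.
move=> x_neq0 /Zp_mulrz_eqmod eq_mod eq_div; apply/val_inj/eqP.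
rewrite -(eqn_pmul2r (_ : 0 < `|x|)%N) ?absz_gt0 //.
by rewrite (divn_eq (val a * _) N) (divn_eq (val b * _) N) eq_mod eq_div.
Qed.

End ZpArith.

Section LinearCombination.
Variables (I : finType) (G : zmodType).
Implicit Types (f g : {ffun I -> G}) (e : {ffun I -> int}).

Definition lincombf f e : G := \sum_i f i *~ e i.

Lemma lincombf_eq_sub f g e e' :
  lincombf f e = lincombf f e' -> lincombf g e = lincombf g e' ->
  \sum_i (f i - g i) *~ (e i - e' i) = 0.
Proof.
move=> eq_f eq_g; transitivity ((lincombf f e - lincombf f e') - (lincombf g e - lincombf g e')).
  rewrite /lincombf -!sumrB; apply: eq_bigr => i _.
  by rewrite mulrzBl !mulrzBr.
by move: eq_f eq_g; rewrite /lincombf => -> ->; rewrite !subrr.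
Qed.

End LinearCombination.

Lemma card_ffun_determined_tag (I T U : finType) (x0 : T) (D : {set I})
    (h : {ffun I -> T} -> U) (A : {pred {ffun I -> T}}) :
  {in A &, forall f g : {ffun I -> T}, h f = h g -> {in ~: D, f =1 g} -> f = g} ->
  (#|A| <= #|U| * #|T| ^ #|~: D|)%N.
Proof.
move=> determined.
pose F (f : {ffun I -> T}) := ([ffun i => if i \in D then x0 else f i], h f).
have F_inj : {in A &, injective F}.
  move=> f g fA gA [/ffunP eq_off eq_h]; apply: determined => // i.
  by rewrite inE => iD; have := eq_off i; rewrite !ffunE (negbTE iD).
rewrite -(card_in_imset F_inj) mulnC.
have -> : (#|T| ^ #|~: D| = #|[set g | g \in pffun_on x0 (~: D) predT]|)%N.
  by rewrite [RHS]cardsE card_pffun_on.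
rewrite -[#|U|]cardsT -cardsX; apply/subset_leq_card/subsetP => _ /imsetP[f _ ->].
rewrite !inE andbT; apply/pffun_onP; split=> [|//].
by apply/subsetP => i; rewrite !inE ffunE; case: (i \in D); rewrite ?eqxx.
Qed.

Lemma card_ffun_determined (I T : finType) (x0 : T) (D : {set I})
    (A : {pred {ffun I -> T}}) :
  {in A &, forall f g : {ffun I -> T}, {in ~: D, f =1 g} -> f = g} ->
  (#|A| <= #|T| ^ #|~: D|)%N.
Proof.
move=> determined; rewrite -[X in (_ <= X)%N]mul1n -(card_unit).
by apply: (card_ffun_determined_tag x0 (h := fun=> tt)) => f g fA gA _; apply: determined.
Qed.

Section CountingZp.
Variables N n : nat.
Hypothesis N_gt1 : (1 < N)%N.
Implicit Types (p q : {ffun 'I_n -> int}).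

Lemma card_lincombf_eq p q (i : 'I_n) : p i != q i ->
  (#|[set f : {ffun 'I_n -> 'Z_N} | lincombf f p == lincombf f q]|
     <= `|p i - q i| * N ^ n.-1)%N.
Proof.
rewrite -subr_eq0 => d_neq0; set d := p i - q i in d_neq0 *.
have [c d_c] : exists c, `|d|%N = c.+1.
  by exists `|d|.-1%N; rewrite prednK // absz_gt0.
pose h (f : {ffun 'I_n -> 'Z_N}) : 'I_c.+1 := inord (val (f i) * c.+1 %/ N).
have h_val f : val (h f) = (val (f i) * c.+1 %/ N)%N.
  rewrite /h /= inordK // ltn_divLR ?(ltn_trans _ N_gt1) //.
  by rewrite [X in (_ < X)%N]mulnC ltn_pmul2r ?Zp_val_lt.
suff determined : {in [set f | lincombf f p == lincombf f q] &, forall f g,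
    h f = h g -> {in ~: [set i], f =1 g} -> f = g}.
  apply: leq_trans (card_ffun_determined_tag 0 determined) _.
  by rewrite cardsC1 !card_ord Zp_cast // d_c.
move=> f g; rewrite !inE => /eqP f_pq /eqP g_pq /(congr1 val) h_fg off_i.
have off j : j != i -> f j = g j by move=> ji; apply: off_i; rewrite !inE.
have := lincombf_eq_sub f_pq g_pq.
rewrite (big_only1 i) // => [|j /off -> _]; last by rewrite subrr mul0rz.
rewrite mulrzBl => /eqP; rewrite subr_eq0 => /eqP fg_i.
apply/ffunP => j; have [->|/off //] := eqVneq j i.
by apply: (Zp_mulrz_divn_inj N_gt1 d_neq0 fg_i); rewrite d_c -!h_val h_fg.
Qed.

(* The coordinates of [f] at the pivots are determined, one after the other, by
   the remaining ones. *)
Lemma card_lincombf_eq_chain m (P : nat -> {ffun 'I_n -> int}) (piv : nat -> 'I_n) :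
  (forall j, (0 < j <= m)%N -> coprime N `|P j (piv j)|) ->
  (forall j l, (0 < j <= m)%N -> (l < j)%N -> P l (piv j) = 0) ->
  (#|[set f : {ffun 'I_n -> 'Z_N} |
       [forall j : 'I_m.+1, lincombf f (P j) == lincombf f (P 0%N)]]|
     <= N ^ (n - m))%N.
Proof.
move=> piv_coprime piv_zero.
have piv_neq0 j : (0 < j <= m)%N -> P j (piv j) != 0.
  by move/piv_coprime; apply: contraTneq => ->; rewrite /coprime gcdn0 gtn_eqF.
have piv_inj : injective (fun j : 'I_m => piv j.+1).
  move=> j l eq_piv; apply/val_inj; have [lt_jl|lt_lj|//] := ltngtP j l.
    by have := piv_neq0 j.+1 (ltn_ord j); rewrite eq_piv (piv_zero l.+1) ?ltn_ord.
  by have := piv_neq0 l.+1 (ltn_ord l); rewrite -eq_piv (piv_zero j.+1) ?ltn_ord.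
set D := [set piv j.+1 | j : 'I_m].
suff determined : {in [set f : {ffun 'I_n -> 'Z_N} |
       [forall j : 'I_m.+1, lincombf f (P j) == lincombf f (P 0%N)]] &,
    forall f g : {ffun 'I_n -> 'Z_N}, {in ~: D, f =1 g} -> f = g}.
  apply: leq_trans (card_ffun_determined 0 determined) _.
  by rewrite cardsCs setCK card_imset // !card_ord Zp_cast.
move=> f g; rewrite !inE => /forallP f_eq /forallP g_eq off_D.
have fg_piv k : (k <= m)%N -> forall j, (0 < j <= k)%N -> f (piv j) = g (piv j).
  elim: k => [|k IHk] k_le j; first by case: j => [|[]].
  move=> /andP[j_gt0]; rewrite leq_eqVlt ltnS => /orP[/eqP ->{j j_gt0}|j_le]; last first.
    by apply: IHk; [exact: ltnW|rewrite j_gt0].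
  have k1 : (0 < k.+1 <= m)%N by [].
  have k_ord : (k.+1 < m.+1)%N by [].
  have := lincombf_eq_sub (eqP (f_eq (Ordinal k_ord))) (eqP (g_eq (Ordinal k_ord))).
  rewrite /= (big_only1 (piv k.+1)) // => [|i].
    rewrite (piv_zero k.+1 0%N) // subr0 => /(Zp_mulrz_eq0 N_gt1 (piv_coprime _ k1)).
    by move/eqP; rewrite subr_eq0 => /eqP.
  have [/imsetP[l _ ->] i_neq _|iD _ _] := boolP (i \in D); last first.
    by rewrite off_D ?inE // subrr mul0rz.
  have [lt_lk|lt_kl|eq_lk] := ltngtP l k.
  - by rewrite IHk ?subrr ?mul0rz ?(ltnW k_le).
  - by rewrite (piv_zero l.+1 k.+1) ?(piv_zero l.+1 0%N) ?ltn_ord // subrr mulr0z.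
  - by move: i_neq; rewrite eq_lk eqxx.
apply/ffunP => i; have [/imsetP[j _ ->]|iD] := boolP (i \in D).
  exact: fg_piv (leqnn m) j.+1 (ltn_ord j).
by apply: off_D; rewrite inE.
Qed.

End CountingZp.

Lemma exists_notin_family (T C : finType) (B : C -> {set T}) :
  (\sum_c #|B c| < #|T|)%N -> exists x, forall c, x \notin B c.
Proof.
move=> small; have [x /forallP x_out|covered] := pickP [pred x | [forall c, x \notin B c]].
  by exists x.
suff : (#|T| <= \sum_c #|B c|)%N by rewrite leqNgt small.
rewrite -sum1_card (@leq_trans (\sum_x \sum_c (x \in B c : nat))) //.
  apply: leq_sum => x _; have /forallPn[c] := negbT (covered x); rewrite negbK => xBc.
  by rewrite (bigD1 c) //= xBc.
rewrite exchange_big /=; apply: leq_sum => c _.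
rewrite -sum1_card [X in (_ <= X)%N]big_mkcond.
by apply: leq_sum => x _; case: (x \in B c).
Qed.

Lemma card_bigcup_le (T I : finType) (P : pred I) (F : I -> {set T}) :
  (#|\bigcup_(i | P i) F i| <= \sum_(i | P i) #|F i|)%N.
Proof.
apply: (big_ind2 (fun (A : {set T}) k => #|A| <= k)%N) => [|A a B b le_a le_b|//].
  by rewrite cards0.
by rewrite (leq_trans (leq_card_setU A B).1) ?leq_add.
Qed.

Section PivotChains.
Variable I : finType.
Implicit Types (e : {ffun I -> int}) (P Q : nat -> {ffun I -> int}).

Definition supp e : {set I} := [set i | e i != 0].

Definition pivot_chain P k : bool :=
  [forall j : 'I_k, (0 < j)%N ==>
     [exists i, (P j i != 0) && [forall l : 'I_j, P l i == 0]]].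

Lemma pivot_chainP P k :
  reflect (forall j, (0 < j < k)%N ->
             exists2 i, P j i != 0 & forall l, (l < j)%N -> P l i = 0)
          (pivot_chain P k).
Proof.
apply: (iffP forallP) => [chain j /andP[j_gt0 j_lt]|chain j].
  have /implyP/(_ j_gt0)/existsP[i /andP[Pji /forallP Pli]] := chain (Ordinal j_lt).
  by exists i => // l l_lt; apply/eqP: (Pli (Ordinal l_lt)).
apply/implyP => j_gt0; have [|i Pji Pli] := chain j; first by rewrite j_gt0 ltn_ord.
by apply/existsP; exists i; rewrite Pji; apply/forallP => l; rewrite Pli.
Qed.

Lemma eq_pivot_chain P Q k :
  (forall j, (j < k)%N -> P j = Q j) -> pivot_chain P k = pivot_chain Q k.
Proof.
move=> eqPQ; apply/pivot_chainP/pivot_chainP => chain j /andP[j_gt0 j_lt];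
  have [|i Pji Pli] := chain j; rewrite ?j_gt0 //; exists i.
- by rewrite -eqPQ.
- by move=> l l_lt; rewrite -eqPQ ?Pli // (ltn_trans l_lt).
- by rewrite eqPQ.
- by move=> l l_lt; rewrite eqPQ ?Pli // (ltn_trans l_lt).
Qed.

(* Either some vector of [E] leaves the union of the supports of the chain built
   so far and extends it, or all supports lie in a set of size at most [m t]. *)
Lemma exists_pivot_chain (E : seq {ffun I -> int}) t m :
  uniq E -> {in E &, injective supp} -> {in E, forall e, #|supp e| <= t}%N ->
  (2 ^ (m * t) < size E)%N ->
  exists cs, [/\ size cs = m.+1, {subset cs <= E} & pivot_chain (nth 0 cs) m.+1].
Proof.
move=> uniq_E supp_inj supp_le large.
suff grow : forall k, (k <= m)%N ->
    exists cs, [/\ size cs = k.+1, {subset cs <= E} & pivot_chain (nth 0 cs) k.+1].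
  exact: grow.
elim=> [_|k IHk k_lt].
  case: E uniq_E supp_inj supp_le large => [//|e E'] _ _ _ _.
  exists [:: e]; split=> // [x|]; first by rewrite inE => /eqP ->; rewrite mem_head.
  by apply/pivot_chainP => -[].
have [cs [size_cs sub_cs chain]] := IHk (ltnW k_lt).
set U := \bigcup_(l < k.+1) supp (nth 0 cs l).
have [/hasP[e eE /subsetPn[i i_e i_U]]|] := boolP (has (fun e => ~~ (supp e \subset U)) E).
  exists (rcons cs e); split=> [||].
  - by rewrite size_rcons size_cs.
  - by move=> x; rewrite mem_rcons inE => /orP[/eqP ->|/sub_cs].
  apply/pivot_chainP => j /andP[j_gt0]; rewrite ltnS leq_eqVlt => /orP[/eqP ->|j_lt].
    exists i; first by move: i_e; rewrite nth_rcons size_cs ltnn eqxx inE.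
    move=> l l_lt; rewrite nth_rcons size_cs l_lt; apply/eqP; apply: contraNT i_U => nz.
    by apply/bigcupP; exists (Ordinal l_lt); rewrite ?inE.
  have [|i' Pji' Pli'] := pivot_chainP _ _ chain j; first by rewrite j_gt0.
  exists i'; first by rewrite nth_rcons size_cs j_lt.
  by move=> l l_lt; rewrite nth_rcons size_cs (ltn_trans l_lt j_lt) Pli'.
move/hasPn => supp_sub; rewrite ltnNge in large; case/negP: large.
rewrite -(size_map supp) -(card_uniqP _); last by rewrite (map_inj_in_uniq supp_inj).
apply: (@leq_trans #|powerset U|).
  apply/subset_leq_card/subsetP => _ /mapP[e eE ->].
  by rewrite inE; move/supp_sub: eE; rewrite negbK.
rewrite card_powerset leq_pexp2l // (leq_trans (card_bigcup_le _ _)) //.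
apply: (@leq_trans (\sum_(l < k.+1) t)).
  by apply: leq_sum => l _; apply/supp_le/sub_cs/mem_nth; rewrite size_cs.
by rewrite sum_nat_const card_ord leq_mul2r k_lt orbT.
Qed.

End PivotChains.

Arguments supp {I} e.

Definition ffun_packing (G : zmodType) n (lam : nat) (M : pred int) (t : nat)
    (f : {ffun 'I_n -> G}) : Prop :=
  forall g (E : seq {ffun 'I_n -> int}), uniq E ->
    (forall e, e \in E -> admissible M t e /\ lincombf f e = g) -> (size E <= lam)%N.

Section Codes.
Variables n t km kp : nat.
Local Notation K := (km + kp).+1.
Local Notation positions := {ffun 'I_t -> 'I_n}.
Local Notation values := {ffun 'I_t -> 'I_K}.
Implicit Types (ix : positions) (v w : values) (e : {ffun 'I_n -> int}) (S : {set 'I_n}).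

(* There are only [(n K)^t] codes [(ix, v)], and every admissible vector is the
   decoding of one of them. *)
Definition decode (ix : positions) (v : values) : {ffun 'I_n -> int} :=
  [ffun i => if [pick j | ix j == i] is Some j then (v j)%:Z - km%:Z else 0].

Definition encode (ix : positions) (e : {ffun 'I_n -> int}) : values :=
  [ffun j => inord `|e (ix j) + km%:Z|].

Lemma decode_range ix v i : - (km%:Z) <= decode ix v i <= kp%:Z.
Proof.
rewrite ffunE; case: pickP => [j _|_]; last lia.
by have := ltn_ord (v j); rewrite ltnS => v_lt; apply/andP; split; lia.
Qed.

Lemma decode_encode ix e :
  (forall i, - (km%:Z) <= e i <= kp%:Z) -> {subset supp e <= codom ix} ->
  decode ix (encode ix e) = e.
Proof.
move=> e_range e_supp; apply/ffunP => i; rewrite ffunE.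
case: pickP => [j /eqP <-|none].
  have /andP[lo hi] := e_range (ix j).
  have abs_e : `|e (ix j) + km%:Z|%:Z = e (ix j) + km%:Z by rewrite gez0_abs; lia.
  by rewrite ffunE inordK -?ltz_nat ?abs_e ?addrK //; lia.
apply/esym/eqP; apply: contraT => e_i.
have /codomP[j i_ix] : i \in codom ix by apply: e_supp; rewrite inE.
by have := none j; rewrite -i_ix eqxx.
Qed.

Variable i0 : 'I_n.

Definition positions_of (S : {set 'I_n}) : positions := [ffun j : 'I_t => nth i0 (enum S) j].

Lemma positions_of_cover S : (#|S| <= t)%N -> {subset S <= codom (positions_of S)}.
Proof.
move=> S_le i iS; have i_lt : (index i (enum S) < t)%N.
  by rewrite (leq_trans _ S_le) // cardE index_mem mem_enum.
by apply/codomP; exists (Ordinal i_lt); rewrite ffunE nth_index ?mem_enum.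
Qed.

Lemma admissible_range e : admissible (Mset km kp) t e ->
  forall i, - (km%:Z) <= e i <= kp%:Z.
Proof.
by case/andP => /forallP e_adm _ i; have /orP[/eqP ->|/andP[]//] := e_adm i; lia.
Qed.

Lemma decode_encode_admissible e : admissible (Mset km kp) t e ->
  decode (positions_of (supp e)) (encode (positions_of (supp e)) e) = e.
Proof.
move=> e_adm; apply: decode_encode; first exact: admissible_range.
by apply: positions_of_cover; case/andP: e_adm.
Qed.

Variable N : nat.
Hypothesis N_gt1 : (1 < N)%N.
Hypothesis coprime_N : coprime N kp`!.
Hypothesis km_le_kp : (km <= kp)%N.

Definition twin_collision (c : positions * values * values) : {set {ffun 'I_n -> 'Z_N}} :=
  [set f | (decode c.1.1 c.1.2 != decode c.1.1 c.2) &&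
           (lincombf f (decode c.1.1 c.1.2) == lincombf f (decode c.1.1 c.2))].

Definition chain_decode m (c : {ffun 'I_m.+1 -> positions * values}) (j : nat) :=
  decode (c (inord j)).1 (c (inord j)).2.

Definition chain_collision m (c : {ffun 'I_m.+1 -> positions * values}) :
    {set {ffun 'I_n -> 'Z_N}} :=
  [set f | pivot_chain (chain_decode c) m.+1 &&
     [forall j : 'I_m.+1,
        lincombf f (chain_decode c j) == lincombf f (chain_decode c 0)]].

Lemma card_twin_collision c : (#|twin_collision c| <= (km + kp) * N ^ n.-1)%N.
Proof.
case: c => -[ix v] w; rewrite /twin_collision /=.
have range_vw i : (`|decode ix v i - decode ix w i| <= km + kp)%N.
  by have /andP[? ?] := decode_range ix v i; have /andP[? ?] := decode_range ix w i; lia.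
move: (decode ix v) (decode ix w) range_vw => p q range_pq.
have [eq_pq|neq_pq] := eqVneq p q.
  by rewrite (eq_card0 (_ : _ =i pred0)) // => f; rewrite !inE.
have [i pq_i] : exists i, p i != q i.
  apply/existsP; apply: contraNT neq_pq => /existsPn same.
  by apply/eqP/ffunP => i; apply/eqP/negPn/same.
apply: leq_trans (card_lincombf_eq N_gt1 pq_i) _.
by rewrite leq_mul2r range_pq orbT.
Qed.

Lemma card_chain_collision m c : (#|@chain_collision m c| <= N ^ (n - m))%N.
Proof.
rewrite /chain_collision; set P := chain_decode c.
have [chain|_] := boolP (pivot_chain P m.+1); last first.
  by rewrite (eq_card0 (_ : _ =i pred0)) // => f; rewrite !inE.
pose is_piv j i := (P j i != 0) && [forall l : 'I_j, P l i == 0].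
pose piv j := odflt i0 [pick i | is_piv j i].
have piv_spec j : (0 < j <= m)%N -> is_piv j (piv j).
  move=> j_bd; rewrite /piv; case: pickP => [i //|none].
  have [|i Pji Pli] := pivot_chainP _ _ chain j; first by rewrite ltnS.
  by move: (negbT (none i)); rewrite /is_piv Pji /= => /forallPn[l]; rewrite Pli ?eqxx.
apply: leq_trans (card_lincombf_eq_chain N_gt1 (P := P) (piv := piv) _ _).
- by apply/subset_leq_card/subsetP => f; rewrite !inE => /andP[].
- move=> j /piv_spec /andP[Pj_neq0 _]; apply: coprime_dvdr coprime_N.
  apply: dvdn_fact; rewrite absz_gt0 Pj_neq0 /=.
  by have /andP[? ?] := decode_range (c (inord j)).1 (c (inord j)).2 (piv j); rewrite /P /chain_decode; lia.
- move=> j l /piv_spec /andP[_ /forallP Pl_zero] l_lt.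
  by apply/eqP: (Pl_zero (Ordinal l_lt)).
Qed.

Lemma exists_collision_free m :
  (n ^ t * K ^ t * K ^ t * ((km + kp) * N ^ n.-1) +
   (n ^ t * K ^ t) ^ m.+1 * N ^ (n - m) < N ^ n)%N ->
  exists f, (forall c, f \notin twin_collision c) /\ (forall c, f \notin @chain_collision m c).
Proof.
move=> small.
pose B (c : (positions * values * values) + {ffun 'I_m.+1 -> positions * values}) :=
  match c with inl c => twin_collision c | inr c => chain_collision c end.
have [|f f_free] := @exists_notin_family _ _ B.
  rewrite card_Zp_ffun // card_ord (leq_ltn_trans _ small) // big_sumType /=.
  apply: leq_add.
    apply: (@leq_trans (\sum_(c : positions * values * values) (km + kp) * N ^ n.-1)%N).
      by apply: leq_sum => c _; apply: card_twin_collision.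
    by rewrite sum_nat_const !card_prod !card_ffun !card_ord.
  apply: (@leq_trans (\sum_(c : {ffun 'I_m.+1 -> positions * values}) N ^ (n - m))%N).
    by apply: leq_sum => c _; apply: card_chain_collision.
  by rewrite sum_nat_const !card_ffun !card_prod !card_ffun !card_ord.
by exists f; split=> c; [exact: f_free (inl c)|exact: f_free (inr c)].
Qed.

Lemma collision_free_packing m f :
  (forall c, f \notin twin_collision c) -> (forall c, f \notin @chain_collision m c) ->
  ffun_packing (2 ^ (m * t)) (Mset km kp) t f.
Proof.
move=> twin_free chain_free g E uniq_E E_adm; rewrite leqNgt; apply/negP => large.
have adm e : e \in E -> admissible (Mset km kp) t e by case/E_adm.
have weight e : e \in E -> (#|supp e| <= t)%N by case/adm/andP.
have supp_inj : {in E &, injective supp}.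
  move=> p q pE qE supp_pq; apply/eqP; apply: contraT => neq_pq.
  set ix := positions_of (supp p).
  have cover_q : {subset supp q <= codom ix} by rewrite -supp_pq; apply/positions_of_cover/weight.
  have := twin_free (ix, encode ix p, encode ix q); rewrite inE /=.
  rewrite decode_encode_admissible ?adm // (decode_encode (admissible_range (adm q qE)) cover_q).
  by rewrite neq_pq (E_adm p pE).2 (E_adm q qE).2 eqxx.
have [cs [size_cs sub_cs chain]] := exists_pivot_chain uniq_E supp_inj weight large.
pose code e := (positions_of (supp e), encode (positions_of (supp e)) e).
pose c := [ffun j : 'I_m.+1 => code cs`_j].
have c_cs j : (j < m.+1)%N -> chain_decode c j = cs`_j.
  move=> j_lt; rewrite /chain_decode ffunE inordK //.
  by apply/decode_encode_admissible/adm/sub_cs/mem_nth; rewrite size_cs.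
have := chain_free c; rewrite inE (eq_pivot_chain c_cs) chain /=; apply/negP/negPn.
apply/forallP => j; rewrite !c_cs //.
by rewrite !(E_adm _ (sub_cs _ (mem_nth _ _))).2 ?size_cs.
Qed.

End Codes.

Section PackingSubsequence.
Variables (G : finZmodType) (n t lam : nat) (M : pred int).
Hypotheses (M1 : 1 \in M) (t_gt0 : (0 < t)%N).
Variable f : {ffun 'I_n -> G}.
Hypothesis f_packing : ffun_packing lam M t f.

Definition unit_ffun (j : 'I_n) : {ffun 'I_n -> int} := [ffun i => (i == j)%:R].

Lemma unit_ffun_inj : injective unit_ffun.
Proof.
move=> j l /ffunP/(_ j); rewrite !ffunE eqxx.
by have [//|_] := eqVneq j l; move/eqP; rewrite oner_eq0.
Qed.

Lemma card_fiber_le y : (#|[set i | f i == y]| <= lam)%N.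
Proof.
rewrite cardE -(size_map unit_ffun); apply: (f_packing (g := y)).
  by rewrite map_inj_uniq ?enum_uniq //; exact: unit_ffun_inj.
move=> e /mapP[j]; rewrite mem_enum inE => /eqP fj ->; split.
  apply/andP; split.
    by apply/forallP => i; rewrite ffunE; case: (i == j).
  rewrite /hweight (_ : [set i | _] = [set j]) ?cards1 //.
  by apply/setP => i; rewrite !inE ffunE; case: (i == j).
rewrite /lincombf (big_only1 j) // => [|i ij _]; first by rewrite ffunE eqxx fj.
by rewrite ffunE (negbTE ij) mulr0z.
Qed.

Lemma leq_mul_card_image : (n <= lam * #|[set f i | i in 'I_n]|)%N.
Proof.
apply: (@leq_trans (\sum_(i in 'I_n) 1)); first by rewrite sum1_card card_ord.
rewrite (partition_big_imset f) /= mulnC -sum_nat_const.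
apply: leq_sum => y _; rewrite sum1_card (leq_trans _ (card_fiber_le y)) //.
by apply/subset_leq_card/subsetP => i; rewrite !inE.
Qed.

Variables (i0 : 'I_n) (s : seq G).
Hypotheses (uniq_s : uniq s) (s_sub : {subset s <= [set f i | i in 'I_n]}).

Definition preimage (k : 'I_(size s)) : 'I_n := odflt i0 [pick i | f i == s`_k].

Lemma f_preimage k : f (preimage k) = s`_k.
Proof.
rewrite /preimage; case: pickP => [i /eqP //|none].
by have /imsetP[i _ fi] := s_sub (mem_nth 0 (ltn_ord k)); have := none i; rewrite fi eqxx.
Qed.

Lemma preimage_inj : injective preimage.
Proof.
move=> k l /(congr1 f); rewrite !f_preimage => /eqP.
by rewrite nth_uniq // => /eqP /val_inj.
Qed.

Definition spread (e : {ffun 'I_(size s) -> int}) : {ffun 'I_n -> int} :=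
  [ffun i => \sum_(k | preimage k == i) e k].

Lemma spread_preimage e k : spread e (preimage k) = e k.
Proof. by rewrite ffunE (big_pred1 k) // => l; rewrite /= (inj_eq preimage_inj). Qed.

Lemma spread_out e i : (forall k, preimage k != i) -> spread e i = 0.
Proof. by move=> out; rewrite ffunE big_pred0 // => k; rewrite (negbTE (out k)). Qed.

Lemma lincombf_spread e : lincombf f (spread e) = lincomb s e.
Proof.
rewrite /lincombf /lincomb.
under eq_bigr => i _ do rewrite ffunE mulrz_sumr.
rewrite (partition_big preimage predT) //=; apply: eq_bigr => i _.
by apply: eq_bigr => k /eqP <-; rewrite f_preimage.
Qed.

Lemma admissible_spread e : admissible M t e -> admissible M t (spread e).
Proof.
have spread_cases i : (exists2 k, preimage k = i & spread e i = e k) \/ spread e i = 0.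
  case: (pickP (fun k => preimage k == i)) => [k /eqP <-|none].
    by left; exists k; rewrite ?spread_preimage.
  by right; rewrite spread_out // => k; rewrite none.
case/andP => /forallP e_adm weight_e; apply/andP; split.
  by apply/forallP => i; have [[k _ ->]|->] := spread_cases i; rewrite ?eqxx.
rewrite /hweight (leq_trans _ weight_e) // (leq_trans _ (leq_imset_card preimage _)) //.
apply/subset_leq_card/subsetP => i; rewrite inE.
have [[k <- ->] e_k|->] := spread_cases i; last by rewrite eqxx.
by apply/imsetP; exists k; rewrite ?inE.
Qed.

Lemma packing_subseq : packing lam M t s.
Proof.
move=> g E uniq_E E_adm; rewrite -(size_map spread); apply: (f_packing (g := g)).
  rewrite map_inj_uniq // => e e' /ffunP eq_spread; apply/ffunP => k.
  by have := eq_spread (preimage k); rewrite !spread_preimage.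
move=> e' /mapP[e eE ->]; have [e_adm e_g] := E_adm e eE.
by rewrite admissible_spread // lincombf_spread.
Qed.

End PackingSubsequence.

Lemma ltn_add_expn_halves N n m a b : (0 < N)%N -> (m <= n)%N -> (0 < n)%N ->
  (2 * a < N)%N -> (2 * b < N ^ m)%N -> (a * N ^ n.-1 + b * N ^ (n - m) < N ^ n)%N.
Proof.
move=> N_gt0 m_le n_gt0 a_lt b_lt.
have a_half : (2 * (a * N ^ n.-1) < N ^ n)%N.
  by rewrite mulnA -{2}(prednK n_gt0) expnS ltn_pmul2r ?expn_gt0 ?N_gt0.
have b_half : (2 * (b * N ^ (n - m)) < N ^ n)%N.
  by rewrite mulnA -{2}(subnKC m_le) expnD ltn_pmul2r ?expn_gt0 ?N_gt0.
lia.
Qed.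

Lemma exists_packing_Zp N t km kp m n0 :
  (1 < N)%N -> (0 < t)%N -> (km <= kp)%N -> (0 < kp)%N -> coprime N kp`! -> (0 < n0)%N ->
  (2 * (2 ^ (m * t)) ^ t * (km + kp).+1 ^ (2 * t).+1 * n0 ^ t < N)%N ->
  (2 * ((2 ^ (m * t)) ^ t * (km + kp).+1 ^ t) ^ m.+1 * n0 ^ (t * m.+1) < N ^ m)%N ->
  exists s : seq 'Z_N, [/\ uniq s, size s = n0 & packing (2 ^ (m * t)) (Mset km kp) t s].
Proof.
move=> N_gt1 t_gt0 km_le_kp kp_gt0 coprime_N n0_gt0.
set lam := (2 ^ (m * t))%N; set n := (lam * n0)%N; set K := (km + kp).+1 => small1 small2.
have lam_gt0 : (0 < lam)%N by rewrite expn_gt0.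
have n_gt0 : (0 < n)%N by rewrite muln_gt0 lam_gt0.
pose i0 : 'I_n := Ordinal n_gt0.
have m_le_n : (m <= n)%N.
  rewrite (leq_trans (ltnW (ltn_expl m (ltnSn 1)))) // (leq_trans _ (leq_pmulr _ n0_gt0)) //.
  by rewrite leq_pexp2l // leq_pmulr.
have a_lt : (2 * (n ^ t * K ^ t * K ^ t * (km + kp)) < N)%N.
  have K_exp : (K ^ (2 * t).+1 = K ^ t * K ^ t * K)%N by rewrite expnSr mul2n -addnn expnD.
  apply: leq_ltn_trans small1; rewrite K_exp /n expnMn.
  move: (lam ^ t)%N (n0 ^ t)%N (K ^ t)%N => x y z; rewrite /K; nia.
have b_eq : ((n ^ t * K ^ t) ^ m.+1 = (lam ^ t * K ^ t) ^ m.+1 * n0 ^ (t * m.+1))%N.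
  by rewrite /n !expnMn expnM mulnAC.
have [|f [twin_free chain_free]] :=
    exists_collision_free (t := t) i0 N_gt1 coprime_N km_le_kp (m := m).
  rewrite mulnA; apply: (ltn_add_expn_halves (ltnW N_gt1) m_le_n n_gt0 a_lt).
  by rewrite b_eq mulnA.
have f_packing := collision_free_packing i0 twin_free chain_free.
have M1 : 1 \in Mset km kp by rewrite unfold_in /=; lia.
have n0_le : (n0 <= #|[set f i | i in 'I_n]|)%N.
  by rewrite -(leq_pmul2l lam_gt0) (leq_mul_card_image M1 t_gt0 f_packing).
exists (take n0 (enum [set f i | i in 'I_n])); split.
- by rewrite take_uniq ?enum_uniq.
- by rewrite size_take -cardE; case: ltngtP n0_le => // /ltnW; rewrite leqNgt => ->.
apply: (packing_subseq f_packing i0); first by rewrite take_uniq ?enum_uniq.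
by move=> y /mem_take; rewrite mem_enum.
Qed.

Section RealEstimates.
Local Open Scope R_scope.

Lemma INR_expn a b : INR (a ^ b)%N = INR a ^ b.
Proof. by elim: b => [|b IHb]; rewrite ?expn0 // expnS mult_INR IHb. Qed.

Lemma exists_nat_gt (X : R) : exists n : nat, X < INR n.
Proof.
have [up_gt _] := archimed X; exists (Z.to_nat (up X)); rewrite INR_IZR_INZ.
suff : IZR (up X) <= IZR (Z.of_nat (Z.to_nat (up X))) by lra.
by apply: IZR_le; lia.
Qed.

Lemma Rpower_eventually_gt (C d : R) : 0 < d ->
  exists N0 : nat, forall N : nat, (N0 <= N)%N -> C < Rpower (INR N) d.
Proof.
move=> d_gt0; have [N0 N0_gt] := exists_nat_gt (Rpower (Rmax C 1) (/ d)).
exists N0 => N /leP/le_INR N_ge.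
have C_le : C <= Rpower (Rpower (Rmax C 1) (/ d)) d.
  have max_gt0 : 0 < Rmax C 1 by apply: Rlt_le_trans Rlt_0_1 (Rmax_r C 1).
  by rewrite Rpower_mult Rinv_l ?Rpower_1 //; [apply: Rmax_l|lra].
apply: Rle_lt_trans C_le (Rlt_Rpower_l _ _ _ d_gt0 _); split; first exact: exp_pos.
lra.
Qed.

Lemma exists_nat_between (P : R) : 1 <= P ->
  exists n : nat, (0 < n)%N /\ / 2 * P <= INR n <= P.
Proof.
move=> P_ge1; have [ip_le ip_gt] := base_Int_part P; set k := Int_part P in ip_le ip_gt.
have k_gt0 : Z.lt 0 k by apply: lt_IZR; lra.
have k_ge1 : 1 <= IZR k by apply: (IZR_le 1); lia.
exists (Z.to_nat k); rewrite INR_IZR_INZ Z2Nat.id; last lia.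
by split; [apply/ltP; lia|lra].
Qed.

Lemma ltn_mul_expn_of_Rpower (c x N j k : nat) (a : R) : (0 < N)%N ->
  INR x <= Rpower (INR N) a -> INR c < Rpower (INR N) (INR j - a * INR k) ->
  (c * x ^ k < N ^ j)%N.
Proof.
move=> /ltP/lt_0_INR N_gt0 x_le c_lt; apply/ltP/INR_lt; rewrite mult_INR !INR_expn.
have xk_le : INR x ^ k <= Rpower (INR N) (a * INR k).
  rewrite -Rpower_mult Rpower_pow; last exact: exp_pos.
  by apply: pow_incr; split; first exact: pos_INR.
rewrite -(Rpower_pow j _ N_gt0) -[INR j](Rplus_minus (a * INR k)) Rpower_plus.
have : 0 < Rpower (INR N) (a * INR k) by apply: exp_pos.
have := pos_INR c; nra.
Qed.

Lemma eventually_ltn_mul_expn (c j k : nat) (a : R) : a * INR k < INR j ->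
  exists N0 : nat, forall N x : nat, (N0 <= N)%N -> (0 < N)%N ->
    INR x <= Rpower (INR N) a -> (c * x ^ k < N ^ j)%N.
Proof.
move=> ak_lt; have [|N0 N0_large] := Rpower_eventually_gt (INR c) (_ : 0 < INR j - a * INR k).
  lra.
by exists N0 => N x N_ge N_gt0 x_le; apply: ltn_mul_expn_of_Rpower N_gt0 x_le (N0_large N N_ge).
Qed.

End RealEstimates.

Local Close Scope ring_scope.
Local Open Scope R_scope.

Theorem theorem15 :
  forall (t : nat), (0 < t)%N ->
  forall eps : Rdefinitions.R,
    Rdefinitions.Rlt (Rdefinitions.IZR BinNums.Z0) eps ->
    Rdefinitions.Rlt eps (Rdefinitions.Rinv (Raxioms.INR t)) ->
  exists lambda : nat,
  forall km kp : nat, (km <= kp)%N -> (1 <= kp + km)%N ->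
  exists N0 : nat, forall N : nat, (N0 <= N)%N -> (1 < N)%N ->
    coprime N (kp`!) ->
    exists s : seq 'Z_N, uniq s /\
      Rdefinitions.Rle
        (Rdefinitions.Rmult (Rdefinitions.Rinv (Rdefinitions.IZR (BinNums.Zpos (BinNums.xO BinNums.xH))))
           (Rpower.Rpower (Raxioms.INR N)
              (Rdefinitions.Rminus (Rdefinitions.Rinv (Raxioms.INR t)) eps)))
        (Raxioms.INR (size s)) /\
      Rdefinitions.Rle (Raxioms.INR (size s))
        (Rdefinitions.Rmult
           (Rdefinitions.Rdiv (Rdefinitions.IZR (BinNums.Zpos (BinNums.xI BinNums.xH))) (Rdefinitions.IZR (BinNums.Zpos (BinNums.xO BinNums.xH))))
           (Rpower.Rpower (Raxioms.INR N)
              (Rdefinitions.Rminus (Rdefinitions.Rinv (Raxioms.INR t)) eps))) /\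
      packing lambda (Mset km kp) t s.
Proof.
move=> t t_gt0 eps eps_gt0 eps_lt; set a := / INR t - eps.
have t_pos : 0 < INR t by apply/lt_0_INR/ltP.
have teps_pos : 0 < INR t * eps by apply: Rmult_lt_0_compat.
have [m m_gt] := exists_nat_gt (/ (INR t * eps)).
have m_large : 1 < INR m * (INR t * eps).
  by have := Rmult_lt_compat_r _ _ _ teps_pos m_gt; rewrite Rinv_l; lra.
exists (2 ^ (m * t))%N => km kp km_le_kp kpkm_ge1.
have [|N1 small1] := eventually_ltn_mul_expn
  (2 * (2 ^ (m * t)) ^ t * (km + kp).+1 ^ (2 * t).+1)%N (j := 1) (k := t) (a := a).
  by rewrite (_ : a * INR t = 1 - INR t * eps) /=; [lra|rewrite /a; field; lra].
have [|N2 small2] := eventually_ltn_mul_expn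
  (2 * ((2 ^ (m * t)) ^ t * (km + kp).+1 ^ t) ^ m.+1)%N (j := m) (k := t * m.+1) (a := a).
  rewrite (_ : a * INR (t * m.+1) = (INR m + 1) * (1 - INR t * eps)); first lra.
  by rewrite /a mult_INR S_INR; field; lra.
exists (maxn N1 N2) => N N_ge N_gt1 coprime_N; have N_gt0 := ltnW N_gt1.
have P_ge1 : 1 <= Rpower (INR N) a.
  rewrite -(Rpower_O _ (lt_0_INR _ (ltP N_gt0))); apply: Rle_Rpower; last by rewrite /a; lra.
  by apply: (le_INR 1); apply/leP.
have [n0 [n0_gt0 [n0_ge n0_le]]] := exists_nat_between P_ge1.
have kp_gt0 : (0 < kp)%N by lia.
have [s [uniq_s size_s packing_s]] := exists_packing_Zp N_gt1 t_gt0 km_le_kp kp_gt0 coprime_N n0_gt0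
  (small1 N n0 (leq_trans (leq_maxl _ _) N_ge) N_gt0 n0_le)
  (small2 N n0 (leq_trans (leq_maxr _ _) N_ge) N_gt0 n0_le).
by exists s; rewrite size_s; do !split=> //; lra.
Qed.
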